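(* For every suboptimal line $(ij)\in O^c(\theta)$, the set $\Delta(\theta,ij)$ is nonempty.
   Context: Customer types $\mathcal I=\{1,\dots,I\}$, servers $\mathcal J=\{1,\dots,J\}$, lines $\mathcal L\subseteq\mathcal I\times\mathcal J$, $\mathcal S_i=\{j:(ij)\in\mathcal L\}$, $\mathcal C_j=\{i:(ij)\in\mathcal L\}$, rates $\lambda\in\mathbb R^I_{>0}$, $\mu\in\mathbb R^J_{>0}$, payoff vector $\theta\in\mathbb R^{\mathcal L}_{\ge0}$. $\mathrm{LP}(\theta,\varepsilon)$: maximize $\sum\theta_{ij}x_{ij}$ s.t. $\sum_{j\in\mathcal S_i}x_{ij}=\lambda_i$ ($i\in\mathcal I$), $\sum_{i\in\mathcal C_j}x_{ij}\le\mu_j-\varepsilon$ ($j\in\mathcal J$), $x\ge0$; dual $\mathrm D(\theta,\varepsilon)$: minimize $\sum_i\lambda_iv_i+\sum_j(\mu_j-\varepsilon)w_j$ s.t. $v_i+w_j\ge\theta_{ij}$ on $\mathcal L$, $w\ge0$. Standing assumptions: $\varepsilon>0$ is a fixed slack for which $\mathrm{LP}(\cdot,\varepsilon)$ is feasible, and for every payoff vector considered all basic feasible solutions of $\mathrm{LP}$ and of its dual are nondegenerate, so optimal primal and dual solutions are unique (with $x^\theta$ the optimal primal solution). $O(\theta)=\{(ij)\in\mathcal L:x^\theta_{ij}>0\}$, $O^c(\theta)=\mathcal L\setminus O(\theta)$. For $a\ge0$, $A(\theta,ij,a)\in\mathbb R^{\mathcal L}_{\ge0}$ equals $\theta$ except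 that its $(ij)$ entry is $a$; $\Delta(\theta,ij)=\{a\ge0:(ij)\in O(A(\theta,ij,a))\}$. *)

From mathcomp Require Import all_boot all_order all_algebra.
Set Implicit Arguments. Unset Strict Implicit. Unset Printing Implicit Defensive.
Import Order.TTheory GRing.Theory Num.Theory.
Local Open Scope ring_scope.

(* A vector in R^L is represented as a function
   on Cust * Serv; primal vectors are required to vanish off L, and only the
   values of payoff vectors on L are ever used. *)
Section LP.
Variables (R : realFieldType) (Cust Serv : finType) (L : {set Cust * Serv}).
Variables (lam : Cust -> R) (mu : Serv -> R) (eps : R).

Definition assigned (x : Cust * Serv -> R) (i : Cust) : R :=
  \sum_(j : Serv | (i, j) \in L) x (i, j).
Definition load (x : Cust * Serv -> R) (j : Serv) : R :=
  \sum_(i : Cust | (i, j) \in L) x (i, j).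
Definition slack (x : Cust * Serv -> R) (j : Serv) : R :=
  mu j - eps - load x j.

Definition primal_feasible (x : Cust * Serv -> R) : Prop :=
  [/\ (forall l, l \notin L -> x l = 0),
      (forall l, l \in L -> 0 <= x l),
      (forall i, assigned x i = lam i) &
      (forall j, load x j <= mu j - eps)].

Definition objective (theta x : Cust * Serv -> R) : R :=
  \sum_(l in L) theta l * x l.

Definition primal_optimal (theta x : Cust * Serv -> R) : Prop :=
  primal_feasible x /\
  forall y, primal_feasible y -> objective theta y <= objective theta x.

(* basic feasible solution of the standard form (variables x_l, l in L, and
   slacks s_j): the columns of the positive variables are linearly
   independent. *)
Definition primal_basic (x : Cust * Serv -> R) : Prop :=
  primal_feasible x /\
  forall (c : Cust * Serv -> R) (d : Serv -> R),
    (forall l, c l != 0 -> (l \in L) && (0 < x l)) ->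
    (forall j, d j != 0 -> 0 < slack x j) ->
    (forall i, assigned c i = 0) ->
    (forall j, load c j + d j = 0) ->
    (forall l, c l = 0) /\ (forall j, d j = 0).

Definition primal_nondegenerate (x : Cust * Serv -> R) : Prop :=
  addn #|[set l in L | 0 < x l]| #|[set j | 0 < slack x j]| =
   addn #|Cust| #|Serv|.

Definition primal_bfs_nondegenerate : Prop :=
  forall x, primal_basic x -> primal_nondegenerate x.

Definition dual_feasible (theta : Cust * Serv -> R) (v : Cust -> R)
    (w : Serv -> R) : Prop :=
  (forall l, l \in L -> theta l <= v l.1 + w l.2) /\ (forall j, 0 <= w j).

(* basic feasible solution of the dual: the active constraints determine
   (v, w) uniquely, i.e. their gradients span R^(I+J) *)
Definition dual_basic (theta : Cust * Serv -> R) (v : Cust -> R)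
    (w : Serv -> R) : Prop :=
  dual_feasible theta v w /\
  forall (dv : Cust -> R) (dw : Serv -> R),
    (forall l, l \in L -> v l.1 + w l.2 = theta l -> dv l.1 + dw l.2 = 0) ->
    (forall j, w j = 0 -> dw j = 0) ->
    (forall i, dv i = 0) /\ (forall j, dw j = 0).

Definition dual_nondegenerate (theta : Cust * Serv -> R) (v : Cust -> R)
    (w : Serv -> R) : Prop :=
  addn #|[set l in L | v l.1 + w l.2 == theta l]| #|[set j | w j == 0]| =
   addn #|Cust| #|Serv|.

Definition dual_bfs_nondegenerate (theta : Cust * Serv -> R) : Prop :=
  forall v w, dual_basic theta v w -> dual_nondegenerate theta v w.

Definition A_upd (theta : Cust * Serv -> R) (l : Cust * Serv) (a : R) :
    Cust * Serv -> R :=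
  fun l' => if l' == l then a else theta l'.

(* (ij) \in O(theta): LP(theta) has an optimal solution and the (unique, under
   nondegeneracy) optimal solution puts positive mass on (ij).  Stated robustly:
   every optimal solution has x_ij > 0. *)
Definition in_O (theta : Cust * Serv -> R) (l : Cust * Serv) : Prop :=
  l \in L /\ (exists x, primal_optimal theta x) /\
  (forall x, primal_optimal theta x -> 0 < x l).

Definition Delta (theta : Cust * Serv -> R) (l : Cust * Serv) (a : R) : Prop :=
  0 <= a /\ in_O (A_upd theta l a) l.

End LP.

From mathcomp Require Import all_boot all_order all_algebra.
From mathcomp Require Import ring lra.
From Stdlib Require Import Classical.
Set Implicit Arguments. Unset Strict Implicit. Unset Printing Implicit Defensive.
Import Order.TTheory GRing.Theory Num.Theory.
Local Open Scope ring_scope.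

(* A line ij that carries flow in some feasible point y gets into the optimal
   support once its payoff is raised high enough: every feasible x with
   x_ij = 0 earns at most K = sum_l theta_l lambda_l.1 under A(theta, ij, a),
   whatever a is, while y earns at least a y_ij, so for a > K / y_ij no optimal
   solution vanishes on ij.  Such a y exists by primal nondegeneracy: a basic
   solution z with z_ij = 0 has |I| + |J| positive variables, so adding the
   column of ij gives a linear dependency in which ij enters with a nonzero
   coefficient, and the ratio test along it makes ij positive.  Optimal
   solutions exist by the fundamental theorem of linear programming: every
   feasible point is dominated by a basic one, and basic solutions are
   determined by their support, of which there are finitely many. *)

Section FiniteFacts.
Variable R : realFieldType.

Lemma card_set_sum (A B : finType) (p : pred (A + B)) :
  #|[set v | p v]| = (#|[set a | p (inl a)]| + #|[set b | p (inr b)]|)%N.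
Proof. by rewrite -!sum1dep_card big_sumType. Qed.

Lemma sum_pair (I J : finType) (F : I * J -> R) :
  \sum_p F p = \sum_i \sum_j F (i, j).
Proof. by rewrite pair_bigA; apply: eq_bigr => -[]. Qed.

Lemma exists_lin_dep (V K : finType) (f : V -> K -> R) (P : {set V}) :
  (#|K| < #|P|)%N ->
  exists e : V -> R, [/\ forall v, v \notin P -> e v = 0, exists v, e v != 0
                       & forall k, \sum_v e v * f v k = 0].
Proof.
move=> ltKP.
have [v0 v0P] : {v0 | v0 \in P}.
  by apply/sigW/card_gt0P; exact: leq_ltn_trans ltKP.
pose A : 'M[R]_(#|P|, #|K|) := \matrix_(a, b) f (enum_val a) (enum_val b).
have /rowV0Pn[u /sub_kermxP uA u0] : kermx A != 0.
  by rewrite kermx_eq0 /row_free neq_ltn (leq_ltn_trans (rank_leq_col A) ltKP).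
pose e v := if v \in P then u 0 (enum_rank_in v0P v) else 0.
have eE a : e (enum_val a) = u 0 a by rewrite /e enum_valP enum_valK_in.
exists e; split.
- by move=> v /negbTE vP; rewrite /e vP.
- have [a ua] : exists a, u 0 a != 0.
    apply/existsP; apply: contraR u0 => /existsPn u0'.
    by apply/eqP/rowP => a; rewrite mxE; apply/eqP/negbNE/u0'.
  by exists (enum_val a); rewrite eE.
move=> k; transitivity (\sum_(v in P) e v * f v k).
  rewrite [RHS]big_mkcond; apply: eq_bigr => v _.
  by case: ifP => // /negbT vP; rewrite /e (negbTE vP) mul0r.
rewrite big_enum_val.
have := congr1 (fun M : 'rV_#|K| => M 0 (enum_rank k)) uA; rewrite !mxE => uAk.
by rewrite -[RHS]uAk; apply: eq_bigr => a _; rewrite eE mxE enum_rankK.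
Qed.

Lemma ratio_test (V : finType) (y e : V -> R) v1 :
  (forall v, 0 <= y v) -> e v1 < 0 ->
  exists2 v0, e v0 < 0 & forall v, 0 <= y v + y v0 / - e v0 * e v.
Proof.
move=> y_ge0 ev1.
have [v0 ev0 v0min] :=
  @arg_minP _ _ _ v1 (fun v => e v < 0) (fun v => y v / - e v) ev1.
exists v0 => // v.
have t_ge0 : 0 <= y v0 / - e v0 by rewrite divr_ge0 // oppr_ge0 ltW.
case: (ltrP (e v) 0) => ev; last by have := mulr_ge0 t_ge0 ev; have := y_ge0 v; lra.
by have := v0min v ev; rewrite ler_pdivlMr ?oppr_gt0 //; lra.
Qed.

Lemma exists_max_of_finite_classes (X : Type) (T : finType) (P : X -> Prop)
    (cls : X -> T) (f : X -> R) :
  (forall x x', P x -> P x' -> cls x = cls x' -> f x = f x') ->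
  (exists x, P x) -> exists2 x, P x & forall z, P z -> f z <= f x.
Proof.
move=> f_cls [x0 Px0].
pose Q t y := (forall x, P x -> cls x = t -> f x = y) /\ exists2 x, P x & y <= f x.
have /fin_all_exists[g gP] : forall t, exists y : R, Q t y.
  move=> t; rewrite /Q.
  case: (classic (exists2 x, P x & cls x = t)) => [[x Px <-]|no_x].
    by exists (f x); split=> [z Pz /(f_cls _ _ Pz Px)|]; last exists x.
  by exists (f x0); split=> [x Px clx|]; [case: no_x; exists x | exists x0].
have [tm _ tm_max] := @arg_maxP _ _ _ (cls x0) xpredT g isT.
have [x Px gx] := (gP tm).2.
exists x => // z Pz; rewrite ((gP (cls z)).1 z Pz erefl).
exact: le_trans (tm_max _ isT) gx.
Qed.

End FiniteFacts.

Section StandardForm.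
Variables (R : realFieldType) (Cust Serv : finType) (L : {set Cust * Serv}).
Variables (lam : Cust -> R) (mu : Serv -> R) (eps : R).

Local Notation feasible := (primal_feasible L lam mu eps).
Local Notation basic := (primal_basic L lam mu eps).

Definition stdvar (x : Cust * Serv -> R) (v : Cust * Serv + Serv) : R :=
  match v with inl l => x l | inr j => slack L mu eps x j end.

Definition supp (x : Cust * Serv -> R) : {set Cust * Serv + Serv} :=
  [set v | 0 < stdvar x v].

(* [e] moves the line variables by [e \o inl] and the slacks by [e \o inr]. *)
Definition kernel_dir (e : Cust * Serv + Serv -> R) : Prop :=
  [/\ forall l, l \notin L -> e (inl l) = 0,
      forall i, assigned L (e \o inl) i = 0 &
      forall j, load L (e \o inl) j + e (inr j) = 0].

Definition shift (y : Cust * Serv -> R) (t : R) (e : Cust * Serv + Serv -> R) :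
    Cust * Serv -> R :=
  fun l => y l + t * e (inl l).

Lemma feasible_stdvar_ge0 x : feasible x -> forall v, 0 <= stdvar x v.
Proof.
case=> off_L on_L _ cap [l|j] /=; last by rewrite /slack subr_ge0.
by case: (boolP (l \in L)) => [/on_L | /off_L ->].
Qed.

Lemma card_supp x : feasible x ->
  #|supp x| = addn #|[set l in L | 0 < x l]| #|[set j | 0 < slack L mu eps x j]|.
Proof.
case=> off_L _ _ _; rewrite card_set_sum; congr addn; apply: eq_card => l.
rewrite !inE /=.
by case: (boolP (l \in L)) => // /off_L ->; rewrite ltxx.
Qed.

Lemma assigned_shift y t e i :
  assigned L (shift y t e) i = assigned L y i + t * assigned L (e \o inl) i.
Proof. by rewrite /assigned big_split -mulr_sumr. Qed.

Lemma load_shift y t e j :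
  load L (shift y t e) j = load L y j + t * load L (e \o inl) j.
Proof. by rewrite /load big_split -mulr_sumr. Qed.

Lemma stdvar_shift y t e : kernel_dir e ->
  forall v, stdvar (shift y t e) v = stdvar y v + t * e v.
Proof.
case=> _ _ e_load [l|j] //=.
by rewrite /slack load_shift (canRL (addrK _) (e_load j)) sub0r; ring.
Qed.

Lemma feasible_shift y t e : feasible y -> kernel_dir e ->
  (forall v, 0 <= stdvar y v + t * e v) -> feasible (shift y t e).
Proof.
move=> [off_L _ assign _] e_dir shift_ge0; have [e_off e_assign _] := e_dir.
split=> [l /[dup] /off_L yl /e_off el | l _ | i | j].
- by rewrite /shift yl el mulr0 addr0.
- exact: shift_ge0 (inl l).
- by rewrite assigned_shift assign e_assign mulr0 addr0.
- have := shift_ge0 (inr j); rewrite -(stdvar_shift y t e_dir (inr j)) /=.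
  by rewrite /slack subr_ge0.
Qed.

Lemma objective_shift theta y t e :
  objective L theta (shift y t e) =
  objective L theta y + t * objective L theta (e \o inl).
Proof.
rewrite /objective mulr_sumr -big_split.
by apply: eq_bigr => l _; rewrite /shift /=; ring.
Qed.

Lemma kernel_dirZ s e : kernel_dir e -> kernel_dir (fun v => s * e v).
Proof.
case=> e_off e_assign e_load; split=> [l /e_off -> | i | j]; first by rewrite mulr0.
  by have := e_assign i; rewrite /assigned /= -mulr_sumr => ->; rewrite mulr0.
by have := e_load j; rewrite /load /= -mulr_sumr -mulrDr => ->; rewrite mulr0.
Qed.

Lemma kernel_dir_neg e : kernel_dir e -> (exists v, e v != 0) -> exists v, e v < 0.
Proof.
case=> e_off e_assign e_load [v0 ev0].
case: (pickP (fun v => e v < 0)) => [v ev | e_ge0]; first by exists v.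
have {}e_ge0 v : 0 <= e v by rewrite leNgt e_ge0.
have e_lines l : e (inl l) = 0.
  case: l => i j; case: (boolP ((i, j) \in L)) => [ijL | /e_off //].
  by have /psumr_eq0P := e_assign i; apply=> // k _; apply: e_ge0.
have e_slacks j : e (inr j) = 0.
  by have := e_load j; rewrite /load big1 ?add0r // => i _; apply: e_lines.
by move: ev0; case: v0 => [l|j]; rewrite ?e_lines ?e_slacks eqxx.
Qed.

Lemma primal_basicE x : feasible x ->
  basic x <-> forall e, kernel_dir e -> (forall v, e v != 0 -> v \in supp x) ->
                       forall v, e v = 0.
Proof.
move=> x_feas; split=> [[_ x_basic] e [e_off e_assign e_load] e_supp | x_basic].
  have c_supp l : e (inl l) != 0 -> (l \in L) && (0 < x l).
    move=> el; have /e_supp := el; rewrite inE /= => ->; rewrite andbT.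
    by apply: contraR el => /e_off ->; rewrite eqxx.
  have d_supp j : e (inr j) != 0 -> 0 < slack L mu eps x j.
    by move/e_supp; rewrite inE.
  have [c0 d0] := x_basic (e \o inl) (e \o inr) c_supp d_supp e_assign e_load.
  by case=> [l|j]; [apply: c0 | apply: d0].
split=> // c d c_supp d_supp c_assign c_load.
pose e v := match v with inl l => c l | inr j => d j end.
have e0 : forall v, e v = 0.
  apply: x_basic; last by case=> [l /c_supp /andP[_]|j /d_supp]; rewrite inE.
  by split=> // l; apply: contraNeq => /c_supp /andP[].
by split=> [l|j]; [apply: (e0 (inl l)) | apply: (e0 (inr j))].
Qed.

Lemma basic_eq_of_supp x x' : basic x -> feasible x' -> supp x = supp x' ->
  x =1 x'.
Proof.
move=> x_basic x'_feas supp_eq; have x_feas := x_basic.1.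
have x_ge0 := feasible_stdvar_ge0 x_feas; have x'_ge0 := feasible_stdvar_ge0 x'_feas.
case: x_feas (x_feas) => off_L _ assign _ x_feas.
case: x'_feas (x'_feas) => off_L' _ assign' _ x'_feas.
pose e v := stdvar x v - stdvar x' v.
have e_dir : kernel_dir e.
  split=> [l /[dup] /off_L xl /off_L' x'l | i | j].
  - by rewrite /e /= xl x'l subrr.
  - by rewrite /assigned /e /= sumrB -!/(assigned L _ i) assign assign' subrr.
  - by rewrite /e /= /slack /load /= sumrB; ring.
have e_supp v : e v != 0 -> v \in supp x.
  apply: contraR => /[dup] xv; rewrite {1}supp_eq !inE -!leNgt in xv *.
  by move=> x'v; apply/eqP; have := x_ge0 v; have := x'_ge0 v; rewrite /e; lra.
have e0 := (primal_basicE x_feas).1 x_basic e e_dir e_supp.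
by move=> l; apply/eqP; rewrite -subr_eq0; apply/eqP/(e0 (inl l)).
Qed.

Lemma objectiveZ (theta c : Cust * Serv -> R) (s : R) :
  objective L theta (fun l => s * c l) = s * objective L theta c.
Proof. by rewrite /objective mulr_sumr; apply: eq_bigr => l _; ring. Qed.

Lemma improve_nonbasic theta y : feasible y -> ~ basic y ->
  exists z, [/\ feasible z, objective L theta y <= objective L theta z
              & supp z \proper supp y].
Proof.
move=> y_feas y_nbasic; apply: NNPP => no_improvement; apply: y_nbasic.
apply/(primal_basicE y_feas) => e0 e0_dir e0_supp v0; apply: NNPP => /eqP e0v0.
have [s s0 obj_ge0] : exists2 s : R, s != 0 & 0 <= s * objective L theta (e0 \o inl).
  by case: (lerP 0 (objective L theta (e0 \o inl))) => ?;
    [exists 1 | exists (-1)]; rewrite ?oppr_eq0 ?oner_eq0 //; lra.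
pose e v := s * e0 v.
have e_dir : kernel_dir e := kernel_dirZ s e0_dir.
have e_supp v : e v != 0 -> v \in supp y.
  by rewrite mulf_eq0 negb_or => /andP[_ /e0_supp].
have [v1 ev1] := kernel_dir_neg e_dir (ex_intro _ v0 (mulf_neq0 s0 e0v0)).
have [w ew e_ok] := ratio_test (feasible_stdvar_ge0 y_feas) ev1.
set t := stdvar y w / - e w in e_ok.
have t_ge0 : 0 <= t by rewrite divr_ge0 ?oppr_ge0 ?(ltW ew) // feasible_stdvar_ge0.
have z_std := stdvar_shift y t e_dir.
apply: no_improvement; exists (shift y t e); split.
- exact: feasible_shift.
- by rewrite objective_shift objectiveZ; have := mulr_ge0 t_ge0 obj_ge0; lra.
apply/properP; split.
  apply/subsetP => v; rewrite !inE z_std.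
  by have [/eqP ->|/e_supp] := boolP (e v == 0); rewrite ?mulr0 ?addr0 // inE.
exists w; first by apply: e_supp; rewrite ltr0_neq0.
have zw : stdvar y w + t * e w = 0 by rewrite /t; field; rewrite ltr0_neq0.
by rewrite inE z_std zw ltxx.
Qed.

Lemma exists_basic_ge theta y : feasible y ->
  exists2 z, basic z & objective L theta y <= objective L theta z.
Proof.
have [n] := ubnP #|supp y|; elim: n y => // n IH y lt_supp y_feas.
case: (classic (basic y)) => [y_basic | y_nbasic]; first by exists y.
have [z [z_feas yz z_proper]] := improve_nonbasic theta y_feas y_nbasic.
have [w w_basic zw] := IH z (leq_trans (proper_card z_proper) lt_supp) z_feas.
by exists w => //; apply: le_trans zw.
Qed.

Lemma exists_primal_optimal theta : (exists x, feasible x) ->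
  exists x, primal_optimal L lam mu eps theta x.
Proof.
move=> [x0 x0_feas]; have [z0 z0_basic _] := exists_basic_ge theta x0_feas.
have obj_supp z z' : basic z -> basic z' -> supp z = supp z' ->
    objective L theta z = objective L theta z'.
  move=> z_basic z'_basic supp_eq; apply: eq_bigr => l _.
  by rewrite (basic_eq_of_supp z_basic z'_basic.1 supp_eq).
have [x x_basic x_max] :=
  exists_max_of_finite_classes obj_supp (ex_intro _ z0 z0_basic).
exists x; split=> [|y y_feas]; first exact: x_basic.1.
have [z z_basic yz] := exists_basic_ge theta y_feas.
exact: le_trans yz (x_max z z_basic).
Qed.

(* Columns of the standard-form constraint matrix; rows are indexed by
   customers (assignment constraints), then servers (capacity constraints). *)
Definition constraint_col (v : Cust * Serv + Serv) (k : Cust + Serv) : R :=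
  match v, k with
  | inl l, inl i => ((l \in L) && (l.1 == i))%:R
  | inl l, inr j => ((l \in L) && (l.2 == j))%:R
  | inr _, inl _ => 0
  | inr j', inr j => (j' == j)%:R
  end.

Lemma sum_constraint_col_inl e i :
  \sum_v e v * constraint_col v (inl i) = assigned L (e \o inl) i.
Proof.
rewrite big_sumType /= [X in _ + X]big1 ?addr0 => [|j _]; last by rewrite mulr0.
rewrite sum_pair (bigD1 i) //= [X in _ + X]big1 ?addr0 => [|i' ne_i'i]; last first.
  by apply: big1 => j _; rewrite (negbTE ne_i'i) andbF mulr0.
rewrite /assigned [RHS]big_mkcond; apply: eq_bigr => j _.
by rewrite eqxx andbT; case: ifP; rewrite ?mulr1 ?mulr0.
Qed.

Lemma sum_constraint_col_inr e j :
  \sum_v e v * constraint_col v (inr j) = load L (e \o inl) j + e (inr j).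
Proof.
rewrite big_sumType /= (bigD1 j) //= eqxx mulr1.
rewrite [X in _ + (_ + X)]big1 ?addr0 => [|j' ne_j'j]; last first.
  by rewrite (negbTE ne_j'j) mulr0.
congr (_ + _); rewrite sum_pair.
rewrite /load [RHS]big_mkcond; apply: eq_bigr => i _ /=.
rewrite (bigD1 j) //= big1 ?addr0 => [|j' ne_j'j]; last first.
  by rewrite (negbTE ne_j'j) andbF mulr0.
by rewrite eqxx andbT; case: ifP; rewrite ?mulr1 ?mulr0.
Qed.

Lemma entering_dir z l : basic z -> primal_nondegenerate L mu eps z ->
  l \in L -> inl l \notin supp z ->
  exists e, [/\ kernel_dir e, e (inl l) = 1
             & forall v, e v != 0 -> v \in inl l |: supp z].
Proof.
move=> z_basic z_nondeg lL l_supp; have [off_L _ _ _] := z_basic.1.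
have card_lt : (#|{: Cust + Serv}| < #|inl l |: supp z|)%N.
  by rewrite cardsU1 l_supp card_sum card_supp ?z_nondeg //; exact: z_basic.1.
have [e0 [e0_supp [v0 e0v0] e0_col]] := exists_lin_dep constraint_col card_lt.
have {}e0_supp v : e0 v != 0 -> v \in inl l |: supp z.
  by apply: contraR => /e0_supp ->; rewrite eqxx.
have e0_dir : kernel_dir e0.
  split=> [l' | i | j]; last 2 first.
  - by rewrite -sum_constraint_col_inl e0_col.
  - by rewrite -sum_constraint_col_inr e0_col.
  apply: contraNeq => /e0_supp; rewrite !inE /= => /orP[/eqP[->] // | ].
  by apply: contraLR => /off_L ->; rewrite ltxx.
have e0l : e0 (inl l) != 0.
  apply: contra e0v0 => /eqP e0l; apply/eqP.
  have e0_supp' v : e0 v != 0 -> v \in supp z.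
    move=> ev; have := e0_supp v ev; rewrite in_setU1 => /orP[/eqP vl | //].
    by rewrite vl e0l eqxx in ev.
  exact: (primal_basicE z_basic.1).1 z_basic e0 e0_dir e0_supp' v0.
exists (fun v => (e0 (inl l))^-1 * e0 v); split.
- exact: kernel_dirZ.
- exact: mulVf.
- by move=> v; rewrite mulf_eq0 negb_or => /andP[_ /e0_supp].
Qed.

Lemma exists_feasible_pos l : primal_bfs_nondegenerate L lam mu eps ->
  l \in L -> (exists x, feasible x) -> exists2 y, feasible y & 0 < y l.
Proof.
move=> nondeg lL [x0 x0_feas]; have [z z_basic _] := exists_basic_ge (fun=> 0) x0_feas.
have z_feas := z_basic.1; have z_ge0 := feasible_stdvar_ge0 z_feas.
have [zl_gt0 | zl_le0] := ltrP 0 (z l); first by exists z.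
have zl0 : z l = 0 by apply/le_anti; rewrite zl_le0 (z_ge0 (inl l)).
have l_supp : inl l \notin supp z by rewrite inE /= zl0 ltxx.
have [e [e_dir el e_supp]] := entering_dir z_basic (nondeg z z_basic) lL l_supp.
have [v1 ev1] : exists v, e v < 0.
  by apply: kernel_dir_neg e_dir _; exists (inl l); rewrite el oner_neq0.
have [w ew e_ok] := ratio_test z_ge0 ev1.
have w_supp : 0 < stdvar z w.
  have /e_supp := ltr0_neq0 ew; rewrite !inE => /orP[/eqP wl | //].
  by move: ew; rewrite wl el ltr10.
exists (shift z (stdvar z w / - e w) e); first exact: feasible_shift.
by rewrite /shift zl0 el add0r mulr1 divr_gt0 // oppr_gt0.
Qed.

Lemma feasible_le_lam x l : feasible x -> l \in L -> x l <= lam l.1.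
Proof.
case: l => i j [_ on_L assign _] ijL /=.
rewrite -(assign i) /assigned (bigD1 j) //= lerDl.
by apply: sumr_ge0 => k /andP[ikL _]; apply: on_L.
Qed.

Lemma objective_upd_le theta x l a : (forall l', l' \in L -> 0 <= theta l') ->
  feasible x -> x l = 0 ->
  objective L (A_upd theta l a) x <= \sum_(l' in L) theta l' * lam l'.1.
Proof.
move=> theta_ge0 x_feas xl0; apply: ler_sum => l' l'L.
have x_le_lam := feasible_le_lam x_feas l'L.
have x_ge0 := feasible_stdvar_ge0 x_feas (inl l').
rewrite /A_upd; case: eqP => [l'l | _]; last by rewrite ler_wpM2l ?theta_ge0.
by subst l'; rewrite xl0 mulr0 mulr_ge0 ?theta_ge0 ?(le_trans x_ge0).
Qed.

Lemma objective_upd_ge theta x l a : (forall l', l' \in L -> 0 <= theta l') ->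
  feasible x -> l \in L -> a * x l <= objective L (A_upd theta l a) x.
Proof.
move=> theta_ge0 x_feas lL; rewrite /objective (bigD1 l) //= /A_upd eqxx lerDl.
apply: sumr_ge0 => l' /andP[l'L ne]; rewrite (negbTE ne) mulr_ge0 ?theta_ge0 //.
exact: feasible_stdvar_ge0 x_feas (inl l').
Qed.

End StandardForm.

Unset Implicit Arguments.

Theorem lemma6 (R : realFieldType) (Cust Serv : finType)
  (L : {set Cust * Serv}) (lam : Cust -> R) (mu : Serv -> R) (eps : R)
  (theta : Cust * Serv -> R) :
  (forall i, 0 < lam i) -> (forall j, 0 < mu j) -> 0 < eps ->
  (exists x, primal_feasible L lam mu eps x) ->
  (forall l, l \in L -> 0 <= theta l) ->
  primal_bfs_nondegenerate L lam mu eps ->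
  dual_bfs_nondegenerate L theta ->
  forall (l : Cust * Serv) (xtheta : Cust * Serv -> R),
    primal_optimal L lam mu eps theta xtheta ->
    l \in L -> xtheta l = 0 ->
    exists a : R, Delta L lam mu eps theta l a.
Proof.
move=> lam_gt0 _ _ ex_feas theta_ge0 nondeg _ l _ _ lL _.
have [y y_feas yl_gt0] := exists_feasible_pos nondeg lL ex_feas.
pose K := \sum_(l' in L) theta l' * lam l'.1.
have K_ge0 : 0 <= K by apply: sumr_ge0 => l' l'L; rewrite mulr_ge0 ?theta_ge0 ?ltW.
exists ((K + 1) / y l); split; first by rewrite divr_ge0 ?ltW // ltr_wpDl.
split=> //; split; first exact: exists_primal_optimal.
move=> x [x_feas x_opt]; rewrite lt_def (feasible_stdvar_ge0 x_feas (inl l)) andbT.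
apply/eqP => xl0; have := x_opt y y_feas.
have := objective_upd_le ((K + 1) / y l) theta_ge0 x_feas xl0.
have := objective_upd_ge ((K + 1) / y l) theta_ge0 y_feas lL.
rewrite divfK ?gt_eqF // -/K; lra.
Qed.
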